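(* Let $(E,\pi,M)$ be a bundle with a $C^1$ connection $\Delta^h$, let $\{u^I\}$ be bundle coordinates, $\Gamma_\mu^a$ the coefficients of $\Delta^h$ in the frame $\{X_I\}$ adapted to $\{\partial/\partial u^I\}$, and $U$ an open set in the domain of $\{u^I\}$. If the normal coordinates equation $$\Big(\frac{\partial\tilde u^a}{\partial u^b}\Gamma_\mu^b+\frac{\partial\tilde u^a}{\partial u^\mu}\Big)\Big|_U=0$$ admits solutions $\{\tilde u^a\}$ (fibre components of bundle coordinates) on $U$, then $R^a_{\mu\nu}|_U=0$, where $$R^a_{\mu\nu}=\partial_\mu(\Gamma_\nu^a)-\partial_\nu(\Gamma_\mu^a)+\Gamma_\mu^b\partial_b(\Gamma_\nu^a)-\Gamma_\nu^b\partial_b(\Gamma_\mu^a)=X_\mu(\Gamma_\nu^a)-X_\nu(\Gamma_\mu^a),\qquad \partial_I=\partial/\partial u^I,$$ are the fibre components of the curvature of $\Delta^h$.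
   Context: $\dim M=n$, fibre dimension $r$; indices $\mu,\nu$ over $1,\dots,n$, $a,b$ over $n+1,\dots,n+r$, $I$ over $1,\dots,n+r$; summation convention. Bundle coordinates: $u^\mu=x^\mu\circ\pi$ for base coordinates. Vertical distribution $\Delta^v_p=T_p(\pi^{-1}(\pi(p)))$; a connection is an $n$-dimensional distribution $\Delta^h$ with $\Delta^v_p\oplus\Delta^h_p=T_p(E)$. The adapted frame is $X_\mu=(\pi_*|_{\Delta^h})^{-1}\pi_*(\partial_\mu)$, $X_a=\partial_a$, and $X_\mu=\partial_\mu+\Gamma_\mu^b\partial_b$ defines $\Gamma_\mu^a$. *)

From HB Require Import structures.
From mathcomp Require Import all_boot all_order all_algebra.
From mathcomp Require Import all_classical all_reals all_analysis.
Set Implicit Arguments. Unset Strict Implicit. Unset Printing Implicit Defensive.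
Import Order.TTheory GRing.Theory Num.Theory.
Import numFieldNormedType.Exports.
Local Open Scope classical_set_scope.
Local Open Scope ring_scope.

(* Coordinates (u^1..u^n, u^{n+1}..u^{n+r}) are points of 'rV[R]_(n + r).
   Base index mu : 'I_n is the coordinate lshift r mu, fibre index a : 'I_r
   is the coordinate rshift n a. *)

Definition ecoord {R : realType} {N : nat} (I : 'I_N) : 'rV[R]_N := delta_mx 0 I.

Definition pd {R : realType} {N : nat} (f : 'rV[R]_N -> R) (I : 'I_N)
  (x : 'rV[R]_N) : R := 'D_(ecoord I) f x.

Definition C1_on {R : realType} {N : nat} (U : set 'rV[R]_N) (f : 'rV[R]_N -> R) :=
  forall I : 'I_N, forall x, U x ->
    derivable f x (ecoord I) /\ {for x, continuous (pd f I)}.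

Definition C2_on {R : realType} {N : nat} (U : set 'rV[R]_N) (f : 'rV[R]_N -> R) :=
  C1_on U f /\ forall I : 'I_N, C1_on U (pd f I).

Definition newcoords {R : realType} {n r : nat} (ut : 'I_r -> 'rV[R]_(n + r) -> R)
  (I : 'I_(n + r)) (x : 'rV[R]_(n + r)) : R :=
  match fintype.split I with
  | inl mu => x 0 (lshift r mu)
  | inr a => ut a x
  end.

(* ut are fibre components of bundle coordinates on U: the map (u^mu, ut^a) is
   a C^2 chart on U (injective with invertible Jacobian at every point of U). *)
Definition fibre_coords_on {R : realType} {n r : nat} (U : set 'rV[R]_(n + r))
  (ut : 'I_r -> 'rV[R]_(n + r) -> R) :=
  (forall a, C2_on U (ut a)) /\
  {in U &, injective (fun x => \row_I newcoords ut I x)} /\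
  (forall x, U x ->
     (\matrix_(I, J) pd (newcoords ut I) J x) \in unitmx).

Definition curv {R : realType} {n r : nat} (Gam : 'I_n -> 'I_r -> 'rV[R]_(n + r) -> R)
  (a : 'I_r) (mu nu : 'I_n) (x : 'rV[R]_(n + r)) : R :=
  pd (Gam nu a) (lshift r mu) x - pd (Gam mu a) (lshift r nu) x
  + \sum_(b < r) (Gam mu b x * pd (Gam nu a) (rshift n b) x
                  - Gam nu b x * pd (Gam mu a) (rshift n b) x).

From HB Require Import structures.
From mathcomp Require Import all_boot all_order all_algebra.
From mathcomp Require Import all_classical all_reals all_analysis.
From mathcomp Require Import ring lra.

(* The normal coordinates equation says that the horizontal frame
   X_mu = d_mu + Gam_mu^b d_b annihilates the new fibre coordinates ut^a, and
   X_mu trivially maps the base coordinates u^nu to constants.  So every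
   component of the chart (u^mu, ut^a) is killed by X_mu X_nu - X_nu X_mu.
   Because the chart is C^2, Schwarz's theorem makes this commutator the vector
   field R^b_{mu nu} d_b, and since the Jacobian of the chart is invertible,
   R^b_{mu nu} = 0. *)

Import Order.TTheory GRing.Theory Num.Theory.
Import numFieldNormedType.Exports.
Local Open Scope classical_set_scope.
Local Open Scope ring_scope.

Section Schwarz.
Context {R : realType} {V : normedModType R}.

Lemma is_derive_line (f : V -> R) (u w : V) (s : R) :
  derivable f (s *: u + w) u ->
  is_derive s 1 (fun h : R => f (h *: u + w)) ('D_u f (s *: u + w)).
Proof.
move=> df.
have E : (fun h : R => h^-1 *: (((fun t : R => f (t *: u + w)) \o shift s) (h *: 1)
      - f (s *: u + w))) =
    (fun h : R => h^-1 *: ((f \o shift (s *: u + w)) (h *: u) - f (s *: u + w))).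
  apply/funext => h /=; congr (_ *: (f _ - _)).
  by rewrite /shift /= scalerDl [_%:A]mulr1 addrA.
by split; rewrite /derivable /derive E.
Qed.

Lemma MVT_segment (g dg : R -> R) (s : R) : 0 < s ->
  (forall t, 0 <= t <= s -> is_derive t 1 g (dg t)) ->
  exists2 c, 0 < c < s & g s - g 0 = dg c * s.
Proof.
move=> s0 hd.
have dg_in : forall t, t \in `]0, s[%R -> is_derive t 1 g (dg t).
  by move=> t; rewrite in_itv /= => /andP[t0 ts]; apply: hd; rewrite !ltW.
have g_cont : {within `[0, s], continuous g}.
  apply: continuous_in_subspaceT => t; rewrite inE /= in_itv /= => /hd [dgt _].
  exact/differentiable_continuous/derivable1_diffP.
have [c cI E] := MVT s0 dg_in g_cont.
by exists c; [move: cI; rewrite in_itv /= | rewrite E subr0].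
Qed.

Definition second_difference (f : V -> R) (u v x : V) (s : R) : R :=
  f (s *: u + (s *: v + x)) - f (s *: u + x) - f (s *: v + x) + f x.

Lemma second_differenceC f u v x s :
  second_difference f u v x s = second_difference f v u x s.
Proof.
by rewrite /second_difference (addrCA (s *: v)); congr (_ + _); rewrite addrAC.
Qed.

Lemma second_difference_MVT (f : V -> R) (u v x : V) (s : R) : 0 < s ->
  (forall a b : R, 0 <= a <= s -> 0 <= b <= s ->
     derivable f (a *: u + (b *: v + x)) u /\
     derivable ('D_u f) (a *: u + (b *: v + x)) v) ->
  exists c d, [/\ 0 < c < s, 0 < d < s &
    second_difference f u v x s = s * s * 'D_v ('D_u f) (c *: u + (d *: v + x))].
Proof.
move=> s0 hd.
have s_in : 0 <= s <= s by rewrite (ltW s0) lexx.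
have o_in : (0 : R) <= 0 <= s by rewrite lexx ltW.
pose g h := f (h *: u + (s *: v + x)) - f (h *: u + x).
pose dg h := 'D_u f (h *: u + (s *: v + x)) - 'D_u f (h *: u + x).
have [c cI Ec] : exists2 c, 0 < c < s & g s - g 0 = dg c * s.
  apply: (@MVT_segment g dg s s0) => t tI; apply: is_deriveB; apply: is_derive_line.
    by have [] := hd t s tI s_in.
  by have [] := hd t 0 tI o_in; rewrite scale0r add0r.
pose k h := 'D_u f (h *: v + (c *: u + x)).
pose dk h := 'D_v ('D_u f) (h *: v + (c *: u + x)).
have c_in : 0 <= c <= s by case/andP: cI => c0 cs; rewrite !ltW.
have [d dI Ed] : exists2 d, 0 < d < s & k s - k 0 = dk d * s.
  apply: (@MVT_segment k dk s s0) => t tI; apply: is_derive_line.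
  by have [] := hd c t c_in tI; rewrite addrCA.
exists c, d; split => //.
move: Ec Ed; rewrite /g /k /dk /second_difference !scale0r !add0r => Ec Ed.
transitivity (dg c * s); first by rewrite -Ec; ring.
by rewrite /dg (addrCA (c *: u)) Ed (addrCA (d *: v)); ring.
Qed.

Lemma second_difference_approx (f : V -> R) (u v x : V) (s e : R) : 0 < s ->
  (forall a b : R, 0 <= a <= s -> 0 <= b <= s ->
     [/\ derivable f (a *: u + (b *: v + x)) u,
         derivable ('D_u f) (a *: u + (b *: v + x)) v &
         `|'D_v ('D_u f) x - 'D_v ('D_u f) (a *: u + (b *: v + x))| < e]) ->
  `|'D_v ('D_u f) x - second_difference f u v x s / (s * s)| < e.
Proof.
move=> s0 hd.
have [|c [d [/andP[c0 cs] /andP[d0 ds] ->]]] := @second_difference_MVT f u v x s s0.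
  by move=> a b ha hb; have [] := hd a b ha hb.
have ss0 : s * s != 0 by rewrite mulf_neq0 ?gt_eqF.
rewrite mulrC mulKf //.
by have [] := hd c d; rewrite ?ltW ?c0 ?d0.
Qed.

Lemma ball_parallelogram (u v x : V) (d a b : R) : 0 < d ->
  0 <= a <= d / (`|u| + `|v| + 1) -> 0 <= b <= d / (`|u| + `|v| + 1) ->
  ball x d (a *: u + (b *: v + x)).
Proof.
move=> d0 /andP[a0 ae] /andP[b0 be].
have nu := normr_ge0 u; have nv := normr_ge0 v.
have N0 : 0 < `|u| + `|v| + 1 by lra.
have hd : d / (`|u| + `|v| + 1) * (`|u| + `|v| + 1) = d by rewrite divfK // gt_eqF.
rewrite -ball_normE /ball_ /= distrC addrA addrK.
apply: (le_lt_trans (ler_normD _ _)); rewrite !normrZ (ger0_norm a0) (ger0_norm b0).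
have := ler_wpM2r nu ae; have := ler_wpM2r nv be.
have : 0 < d / (`|u| + `|v| + 1) by rewrite divr_gt0.
nra.
Qed.

Lemma schwarz (f : V -> R) (u v x : V) :
  (\forall y \near x, [/\ derivable f y u, derivable f y v,
      derivable ('D_u f) y v & derivable ('D_v f) y u]) ->
  {for x, continuous ('D_v ('D_u f))} -> {for x, continuous ('D_u ('D_v f))} ->
  'D_v ('D_u f) x = 'D_u ('D_v f) x.
Proof.
move=> hd cuv cvu.
(* Both mixed partials are close to the same, symmetric, second difference quotient. *)
apply/eqP; rewrite -subr_eq0 -normr_le0; apply/ler_addgt0Pr => e e0; rewrite add0r.
have e20 : 0 < e / 2 by rewrite divr_gt0.
move: (cuv) => /cvgr_dist_lt /(_ _ e20) near_uv.
move: (cvu) => /cvgr_dist_lt /(_ _ e20) near_vu.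
have [d /= d0 near_x] := (@nbhs_ballP R V x _).1
  (filterI hd (filterI near_uv near_vu)).
pose s := d / (`|u| + `|v| + 1).
have s0 : 0 < s by rewrite divr_gt0 // ltr_wpDl ?addr_ge0.
have in_ball a b : 0 <= a <= s -> 0 <= b <= s -> ball x d (a *: u + (b *: v + x)).
  exact: ball_parallelogram.
pose Q := second_difference f u v x s / (s * s).
have Huv : `|'D_v ('D_u f) x - Q| < e / 2.
  apply: (@second_difference_approx f u v x s (e / 2) s0) => a b ha hb.
  by have [[? _ ? _] [? _]] := near_x _ (in_ball a b ha hb).
have Hvu : `|'D_u ('D_v f) x - Q| < e / 2.
  rewrite /Q second_differenceC.
  apply: (@second_difference_approx f v u x s (e / 2) s0) => a b ha hb.
  by have := near_x _ (in_ball b a hb ha); rewrite addrCA => -[[_ ? _ ?] [_ ?]].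
apply/ltW; rewrite (splitr e); apply: le_lt_trans (ltrD Huv Hvu).
by apply: le_trans (ler_normB _ _); rewrite opprB addrA subrK.
Qed.

End Schwarz.

Section Coordinates.
Context {R : realType} {N : nat}.
Implicit Types (f : 'rV[R]_N -> R) (x : 'rV[R]_N) (I J K : 'I_N).

Lemma pd_near_cst f (c : R) x I : (\forall y \near x, f y = c) -> pd f I x = 0.
Proof. by move=> fc; rewrite /pd (near_eq_derive _ fc) derive_cst. Qed.

Lemma is_derive_coord K x (v : 'rV[R]_N) : is_derive x v (fun y => y 0 K) (v 0 K).
Proof.
have quotient_cst : \forall h \near 0^',
    h^-1 *: (((fun y : 'rV[R]_N => y 0 K) \o shift x) (h *: v) - x 0 K) = v 0 K.
  near=> h; rewrite /= !mxE addrK /GRing.scale /= mulKf //.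
  by near: h; exact: nbhs_dnbhs_neq.
apply: DeriveDef; first exact: is_cvg_near_cst quotient_cst.
exact: lim_near_cst.
Unshelve. all: by end_near.
Qed.

Lemma pd_coord K J x : pd (fun y => y 0 K) J x = (K == J)%:R.
Proof.
by rewrite /pd; have [_ ->] := is_derive_coord K x (ecoord J); rewrite mxE eqxx eq_sym.
Qed.

Lemma coord_C2_on (U : set 'rV[R]_N) K : C2_on U (fun y => y 0 K).
Proof.
have pd_coordE J : pd (fun y => y 0 K) J = cst ((K == J)%:R : R).
  by apply/funext => y; rewrite pd_coord.
have C1_cst (c : R) : C1_on U (cst c).
  move=> I y _; split; first exact: derivable_cst.
  have -> : pd (cst c) I = cst 0 by apply/funext => z; rewrite /pd derive_cst.
  exact: cst_continuous.
split=> [I y _|J]; last by rewrite pd_coordE.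
split; first by have [] := is_derive_coord K y (ecoord I).
by rewrite pd_coordE; exact: cst_continuous.
Qed.

Lemma pdC (U : set 'rV[R]_N) f x I J : open U -> U x -> C2_on U f ->
  pd (pd f J) I x = pd (pd f I) J x.
Proof.
move=> oU Ux [f_C1 f_C2]; apply: schwarz; last 2 first.
- exact: (f_C2 J I x Ux).2.
- exact: (f_C2 I J x Ux).2.
apply: filterS (oU x Ux) => y Uy; split.
- exact: (f_C1 J y Uy).1.
- exact: (f_C1 I y Uy).1.
- exact: (f_C2 J I y Uy).1.
- exact: (f_C2 I J y Uy).1.
Qed.

Definition vfapply (X : 'I_N -> 'rV[R]_N -> R) f x : R := \sum_I X I x * pd f I x.

Lemma vfapply_near_cst X f (c : R) x :
  (\forall y \near x, f y = c) -> vfapply X f x = 0.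
Proof.
by move=> fc; rewrite /vfapply big1 // => I _; rewrite (@pd_near_cst f c x I fc) mulr0.
Qed.

Lemma pd_vfapply X f x I :
  (forall J, derivable (X J) x (ecoord I)) ->
  (forall J, derivable (pd f J) x (ecoord I)) ->
  pd (vfapply X f) I x = \sum_J (pd (X J) I x * pd f J x + X J x * pd (pd f J) I x).
Proof.
move=> dX df.
have -> : vfapply X f = \sum_J (X J * pd f J).
  by apply/funext => y; rewrite /vfapply fct_sumE.
rewrite {1}/pd derive_sum => [|J]; last exact: derivableM (dX J) (df J).
by apply: eq_bigr => J _; rewrite deriveM // addrC mulrC.
Qed.

Lemma vfapply_vfapply X Y f x :
  (forall I J, derivable (Y J) x (ecoord I)) ->
  (forall I J, derivable (pd f J) x (ecoord I)) ->
  vfapply X (vfapply Y f) x = \sum_J vfapply X (Y J) x * pd f J x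
    + \sum_I \sum_J X I x * Y J x * pd (pd f J) I x.
Proof.
move=> dY df; rewrite {1}/vfapply.
under eq_bigr => I _ do rewrite (@pd_vfapply Y f x I (dY I) (df I)) mulr_sumr.
under eq_bigr => I _ do under eq_bigr => J _ do rewrite mulrDr !mulrA.
under eq_bigr => I _ do rewrite big_split /=.
rewrite big_split /= exchange_big /=; congr (_ + _).
by apply: eq_bigr => J _; rewrite /vfapply mulr_suml.
Qed.

Lemma vfapply_bracket X Y f x :
  (forall I J, derivable (X J) x (ecoord I)) ->
  (forall I J, derivable (Y J) x (ecoord I)) ->
  (forall I J, derivable (pd f J) x (ecoord I)) ->
  (forall I J, pd (pd f J) I x = pd (pd f I) J x) ->
  vfapply X (vfapply Y f) x - vfapply Y (vfapply X f) x
    = \sum_J (vfapply X (Y J) x - vfapply Y (X J) x) * pd f J x.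
Proof.
move=> dX dY df pdfC; rewrite !vfapply_vfapply //.
have -> : \sum_I \sum_J Y I x * X J x * pd (pd f J) I x
        = \sum_I \sum_J X I x * Y J x * pd (pd f J) I x.
  rewrite exchange_big; apply: eq_bigr => I _; apply: eq_bigr => J _.
  by rewrite pdfC (mulrC (Y J x)).
rewrite opprD addrACA subrr addr0 -sumrB.
by apply: eq_bigr => J _; rewrite mulrBl.
Qed.

End Coordinates.

Section AdaptedFrame.
Context {R : realType} {n r : nat}.
Variable Gam : 'I_n -> 'I_r -> 'rV[R]_(n + r) -> R.

(* [hframe Gam mu I] is the [I]-th component of X_mu = d_mu + Gam_mu^b d_b. *)
Definition hframe (mu : 'I_n) (I : 'I_(n + r)) (y : 'rV[R]_(n + r)) : R :=
  match fintype.split I with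
  | inl m => (m == mu)%:R
  | inr b => Gam mu b y
  end.

Lemma hframe_lshift mu m : hframe mu (lshift r m) = fun=> (m == mu)%:R.
Proof. by apply/funext => y; rewrite /hframe (unsplitK (inl m)). Qed.

Lemma hframe_rshift mu b : hframe mu (rshift n b) = Gam mu b.
Proof. by apply/funext => y; rewrite /hframe (unsplitK (inr b)). Qed.

Lemma vfapply_hframe mu f y :
  vfapply (hframe mu) f y
    = pd f (lshift r mu) y + \sum_b Gam mu b y * pd f (rshift n b) y.
Proof.
rewrite /vfapply big_split_ord /=; congr (_ + _).
  rewrite (bigD1 mu) //= big1 => [|m /negPf m_mu]; last first.
    by rewrite hframe_lshift m_mu mul0r.
  by rewrite hframe_lshift eqxx mul1r addr0.
by apply: eq_bigr => b _; rewrite hframe_rshift.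
Qed.

Lemma hframe_derivable mu J x v :
  (forall b, derivable (Gam mu b) x v) -> derivable (hframe mu J) x v.
Proof.
move=> dGam; rewrite -[J]splitK; case: (fintype.split J) => [m|b] /=.
  by rewrite hframe_lshift; exact: derivable_cst.
by rewrite hframe_rshift.
Qed.

Lemma hframe_bracket_rshift mu nu b x :
  vfapply (hframe mu) (hframe nu (rshift n b)) x
    - vfapply (hframe nu) (hframe mu (rshift n b)) x = curv Gam b mu nu x.
Proof. by rewrite !hframe_rshift !vfapply_hframe /curv sumrB; ring. Qed.

End AdaptedFrame.

Definition normal_coords_eq {R : realType} {n r : nat}
    (Gam : 'I_n -> 'I_r -> 'rV[R]_(n + r) -> R) (U : set 'rV[R]_(n + r))
    (ut : 'I_r -> 'rV[R]_(n + r) -> R) : Prop :=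
  forall (a : 'I_r) (mu : 'I_n) y, U y ->
    \sum_(b < r) pd (ut a) (rshift n b) y * Gam mu b y + pd (ut a) (lshift r mu) y = 0.

Section NormalCoordinates.
Context {R : realType} {n r : nat}.
Implicit Types (ut : 'I_r -> 'rV[R]_(n + r) -> R) (U : set 'rV[R]_(n + r)).

Lemma newcoords_lshift ut m : newcoords ut (lshift r m) = fun y => y 0 (lshift r m).
Proof. by apply/funext => y; rewrite /newcoords (unsplitK (inl m)). Qed.

Lemma newcoords_rshift ut a : newcoords ut (rshift n a) = ut a.
Proof. by apply/funext => y; rewrite /newcoords (unsplitK (inr a)). Qed.

Lemma newcoords_C2_on U ut I : (forall a, C2_on U (ut a)) -> C2_on U (newcoords ut I).
Proof.
move=> ut_C2; rewrite -[I]splitK; case: (fintype.split I) => [m|a] /=.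
  by rewrite newcoords_lshift; exact: coord_C2_on.
by rewrite newcoords_rshift.
Qed.

Variables (Gam : 'I_n -> 'I_r -> 'rV[R]_(n + r) -> R) (U : set 'rV[R]_(n + r))
  (ut : 'I_r -> 'rV[R]_(n + r) -> R).
Hypotheses (oU : open U) (Gam_C1 : forall mu b, C1_on U (Gam mu b))
  (ut_C2 : forall a, C2_on U (ut a)) (ut_normal : normal_coords_eq Gam U ut).

Lemma vfapply_hframe_newcoords mu I x : U x ->
  \forall y \near x, vfapply (hframe Gam mu) (newcoords ut I) y = (I == lshift r mu)%:R.
Proof.
move=> Ux; apply: filterS (oU x Ux) => y Uy.
rewrite vfapply_hframe -[I]splitK; case: (fintype.split I) => [m|a] /=.
  rewrite newcoords_lshift pd_coord big1 ?addr0 // => b _.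
  by rewrite pd_coord eq_lrshift mulr0.
rewrite newcoords_rshift eq_rlshift mulr0n -[RHS](ut_normal a mu y Uy) addrC.
by congr (_ + _); apply: eq_bigr => b _; rewrite mulrC.
Qed.

Lemma hframe_bracket_newcoords mu nu I x : U x ->
  \sum_J (vfapply (hframe Gam mu) (hframe Gam nu J) x
          - vfapply (hframe Gam nu) (hframe Gam mu J) x) * pd (newcoords ut I) J x = 0.
Proof.
move=> Ux; have I_C2 := newcoords_C2_on U ut I ut_C2.
have dframe m K L : derivable (hframe Gam m L) x (ecoord K).
  by apply: hframe_derivable => b; exact: (Gam_C1 m b K x Ux).1.
have I_df K L : derivable (pd (newcoords ut I) L) x (ecoord K).
  exact: (I_C2.2 L K x Ux).1.
have I_sym K L := pdC U (newcoords ut I) x K L oU Ux I_C2.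
rewrite -(vfapply_bracket _ _ _ _ (dframe mu) (dframe nu) I_df I_sym).
have XX_cst m m' := vfapply_near_cst (hframe Gam m) _ _ x
  (vfapply_hframe_newcoords m' I x Ux).
by rewrite !XX_cst subrr.
Qed.

End NormalCoordinates.

Theorem proposition5p4 (R : realType) (n r : nat)
  (Gam : 'I_n -> 'I_r -> 'rV[R]_(n + r) -> R)
  (U : set 'rV[R]_(n + r)) (ut : 'I_r -> 'rV[R]_(n + r) -> R) :
  open U ->
  (forall mu a, C1_on U (Gam mu a)) ->
  fibre_coords_on U ut ->
  (forall (a : 'I_r) (mu : 'I_n) x, U x ->
     \sum_(b < r) pd (ut a) (rshift n b) x * Gam mu b x
     + pd (ut a) (lshift r mu) x = 0) ->
  forall (a : 'I_r) (mu nu : 'I_n) x, U x -> curv Gam a mu nu x = 0.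
Proof.
move=> oU Gam_C1 [ut_C2 [_ jacobian_unit]] ut_normal a mu nu x Ux.
pose w := \col_J (vfapply (hframe Gam mu) (hframe Gam nu J) x
                  - vfapply (hframe Gam nu) (hframe Gam mu J) x).
have jacobian_w : (\matrix_(I, J) pd (newcoords ut I) J x) *m w = 0.
  apply/matrixP => I k; rewrite !mxE.
  apply: etrans (hframe_bracket_newcoords _ _ _ oU Gam_C1 ut_C2 ut_normal mu nu I x Ux).
  by apply: eq_bigr => J _; rewrite !mxE mulrC.
have w0 : w = 0 by rewrite -(mulKmx (jacobian_unit x Ux) w) jacobian_w mulmx0.
by have := congr1 (fun v : 'cV_(n + r) => v (rshift n a) 0) w0;
  rewrite !mxE hframe_bracket_rshift.
Qed.
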